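(* Let $M$ be a connected split matroid of rank $k$ on $E=[n]$, and let $F$ and $G$ be two distinct proper cyclic flats of $M$ of ranks $r$ and $s$. Set $Q=\Delta_{k,n}\cap H^+(F,r)\cap H^+(G,s)$, $\alpha=|F\setminus G|$, $\beta=|G\setminus F|$, $\gamma=|F\cap G|$. If $F$ and $G$ form a modular pair, then \[ Q=\Delta_{\gamma,F\cap G}\times\Delta_{r-\gamma,F\setminus G}\times\Delta_{s-\gamma,G\setminus F}\times\Delta_{0,E\setminus(F\cup G)}\cong\Delta_{r-\gamma,\alpha}\times\Delta_{s-\gamma,\beta}, \] and $Q$ coincides with $\Delta_{k,n}\cap H(F,r)\cap H(G,s)$. Otherwise, $Q$ is empty.
   Context: For $A\subseteq E$ and $r\in\mathbb R$, $H^+(A,r)=\{x\in\mathbb R^E:\sum_{i\in A}x_i\ge r\}$, $H^-(A,r)=\{x:\sum_{i\in A}x_i\le r\}$ and $H(A,r)=H^+(A,r)\cap H^-(A,r)$. For a finite set $S$, $\Delta_{m,S}\subset\mathbb R^S$ is the convex hull of indicator vectors of $m$-subsets of $S$ and $\Delta_{m,N}=\Delta_{m,[N]}$; products over disjoint sets partitioning $E$ are regarded as subsets of $\mathbb R^E$. A cyclic flat is a flat that is a union of circuits; $(F,G)$ is a modular pair if $\mathrm{rk}F+\mathrm{rk}G=\mathrm{rk}(F\cup G)+\mathrm{rk}(F\cap G)$. A subset $A$ is stressed if $M|A$ and $M/A$ are uniform; its cover is the set of $k$-subsets $B$ with $|B\cap A|\ge \mathrm{rk}(A)+1$; relaxing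 $A$ means adding its cover to the set of bases. A connected matroid is split if relaxing all stressed subsets with nonempty cover yields a uniform matroid. *)

(* Matroids are given by their set of bases on a finite type. *)
From mathcomp Require Import all_boot all_order all_algebra.
Set Implicit Arguments. Unset Strict Implicit. Unset Printing Implicit Defensive.
Import Order.TTheory GRing.Theory Num.Theory.

Section Matroids.
Variable T : finType.
Implicit Types (Bs : {set {set T}}) (A B C F G X : {set T}).

Definition is_matroid Bs : Prop :=
  Bs != set0 /\
  forall B1 B2, B1 \in Bs -> B2 \in Bs -> forall x, x \in B1 :\: B2 ->
    exists y, y \in B2 :\: B1 /\ y |: (B1 :\ x) \in Bs.

Definition rk Bs A : nat := \max_(B in Bs) #|A :&: B|.

Definition indep Bs (I : {set T}) : bool := [exists B in Bs, I \subset B].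

Definition circuit Bs C : Prop :=
  ~~ indep Bs C /\ forall x, x \in C -> indep Bs (C :\ x).

Definition flat Bs F : Prop :=
  forall x, x \notin F -> rk Bs F < rk Bs (x |: F).

Definition cyclic Bs F : Prop :=
  forall x, x \in F -> exists C, [/\ circuit Bs C, x \in C & C \subset F].

Definition cyclic_flat Bs F : Prop := flat Bs F /\ cyclic Bs F.

Definition proper_subset F : Prop := F != set0 /\ F != setT.

Definition modular_pair Bs F G : Prop :=
  (rk Bs F + rk Bs G = rk Bs (F :|: G) + rk Bs (F :&: G))%N.

Definition connected Bs : Prop :=
  forall x y : T, x != y -> exists C, [/\ circuit Bs C, x \in C & y \in C].

Definition uniform_on (rkf : {set T} -> nat) (S : {set T}) : Prop :=
  forall X, X \subset S -> rkf X = minn #|X| (rkf S).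

(* M|A and M/A uniform; the contraction M/A has ground set E\A and
   rank function X |-> rk (X u A) - rk A *)
Definition stressed Bs A : Prop :=
  uniform_on (rk Bs) A /\
  uniform_on (fun X => (rk Bs (X :|: A) - rk Bs A)%N) (~: A).

Definition cover (k : nat) Bs A : {set {set T}} :=
  [set B : {set T} | (#|B| == k) && (rk Bs A < #|B :&: A|)%N].

(* connected, and relaxing all stressed subsets with nonempty cover
   yields the uniform matroid U_{k,E} *)
Definition split_matroid Bs (k : nat) : Prop :=
  connected Bs /\
  forall B, #|B| = k <->
    (B \in Bs \/ exists A, [/\ stressed Bs A, cover k Bs A != set0 & B \in cover k Bs A]).

End Matroids.

Section Polytopes.
Variables (R : realFieldType) (T : finType).
Local Open Scope ring_scope.

(* x restricted to S lies in Delta_{m,S}: convex hull of indicator vectors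
   of m-subsets of S *)
Definition hyp (m : int) (S : {set T}) (x : T -> R) : Prop :=
  exists lam : {set T} -> R,
    [/\ forall B, 0 <= lam B,
        forall B, lam B != 0 -> B \subset S /\ (#|B|%:Z = m),
        \sum_(B : {set T}) lam B = 1 &
        forall i, i \in S -> x i = \sum_(B : {set T}) lam B * (i \in B)%:R].

Definition Hplus (A : {set T}) (r : R) (x : T -> R) : Prop := r <= \sum_(i in A) x i.
Definition Hminus (A : {set T}) (r : R) (x : T -> R) : Prop := \sum_(i in A) x i <= r.
Definition Hyper (A : {set T}) (r : R) (x : T -> R) : Prop := Hplus A r x /\ Hminus A r x.

End Polytopes.

(* A proper cyclic flat Z of a split matroid is stressed: exchanging an element of Z \ B0 into
   a basis B0 realising rk Z, against one of B0 \ Z, gives a k-set that is not a basis, hence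
   lies in the cover of some stressed A; if A ≠ Z then rk (A ∩ Z) = |A ∩ Z| and rk (A ∪ Z) = k,
   and submodularity contradicts a count inside B0.  For F and G this yields
   k + |F ∩ G| ≤ r + s, with equality exactly for a modular pair.
   Δ_{m,S} is the set of points of [0,1]^S with coordinate sum m: moving mass between two
   fractional coordinates, in either direction, writes a point as a convex combination of
   points with fewer fractional coordinates.  A point x of Δ_{k,n} satisfies
   x(F) + x(G) + x(E \ (F ∪ G)) = k + x(F ∩ G) ≤ k + |F ∩ G|, so H^+(F,r) ∩ H^+(G,s) misses
   Δ_{k,n} when r + s > k + |F ∩ G|, and when r + s = k + |F ∩ G| every slack vanishes, which
   fixes the coordinate sum on each of the four blocks. *)

From Pilot Require Import Defs.
From mathcomp Require Import all_boot all_order all_algebra.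
From mathcomp Require Import zify ring lra.
Import Order.TTheory GRing.Theory Num.Theory.

Set Implicit Arguments. Unset Strict Implicit. Unset Printing Implicit Defensive.

Section MatroidRank.
Variables (T : finType) (Bs : {set {set T}}) (k : nat).
Hypothesis matroid_Bs : is_matroid Bs.
Hypothesis card_basis : forall B, B \in Bs -> #|B| = k.
Implicit Types (A B C W X Y Z : {set T}).

Lemma leq_card_rk X B : B \in Bs -> #|X :&: B| <= rk Bs X.
Proof. by move=> BsB; rewrite /rk (leq_bigmax_cond (F := fun B => #|X :&: B|)). Qed.

Lemma rk_attained X : exists2 B, B \in Bs & rk Bs X = #|X :&: B|.
Proof.
have : 0 < #|Bs| by rewrite card_gt0; case: matroid_Bs.
by case/(eq_bigmax_cond (fun B => #|X :&: B|)) => B BsB eqB; exists B.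
Qed.

Lemma rkS X Y : X \subset Y -> rk Bs X <= rk Bs Y.
Proof.
move=> sXY; have [B BsB ->] := rk_attained X.
exact: leq_trans (subset_leq_card (setSI B sXY)) (leq_card_rk Y BsB).
Qed.

Lemma rk_le_card X : rk Bs X <= #|X|.
Proof. by have [B _ ->] := rk_attained X; rewrite subset_leq_card ?subsetIl. Qed.

Lemma rk_le_rank X : rk Bs X <= k.
Proof.
by have [B BsB ->] := rk_attained X; rewrite -(card_basis BsB) subset_leq_card ?subsetIr.
Qed.

Lemma rkT : rk Bs setT = k.
Proof.
have [B BsB _] := rk_attained setT.
by apply/eqP; rewrite eqn_leq rk_le_rank -(card_basis BsB) -{1}(setTI B) leq_card_rk.
Qed.

Lemma rk_indep X : rk Bs X = #|X| -> indep Bs X.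
Proof.
have [B BsB ->] := rk_attained X; move=> eqXB; apply/exists_inP; exists B => //.
have /eqP <- : X :&: B == X by rewrite eqEcard subsetIl eqXB leqnn.
exact: subsetIr.
Qed.

Lemma indepS X Y : X \subset Y -> indep Bs Y -> indep Bs X.
Proof.
move=> sXY /exists_inP [B BsB sYB]; apply/exists_inP; exists B => //.
exact: subset_trans sYB.
Qed.

Lemma basis_augment W B0 B1 : B0 \in Bs -> B1 \in Bs ->
  exists2 B, B \in Bs & (B0 :&: W \subset B) && (#|W :&: B1| <= #|W :&: B|).
Proof.
move=> + BsB1; elim: {B0}_.+1 {-2}B0 (ltnSn #|B0 :\: B1|) => // m IH B0 ltB0m BsB0.
have [sDW | /subsetPn [x xB0 xW]] := boolP (B0 :\: B1 \subset W).
  exists B0; rewrite // subsetIl /= !(setIC W).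
  have sB0B1 : B0 :\: W \subset B1 :\: W.
    apply/subsetP => y; rewrite !inE => /andP [yW yB0]; rewrite yW /=.
    by apply: contraR yW => yB1; apply: (subsetP sDW); rewrite inE yB1 yB0.
  have := cardsID W B0; have := cardsID W B1; have := subset_leq_card sB0B1.
  by rewrite (card_basis BsB0) (card_basis BsB1); lia.
have [y [yB1 BsB']] := matroid_Bs.2 B0 B1 BsB0 BsB1 x xB0.
have eqD : (y |: (B0 :\ x)) :\: B1 = (B0 :\: B1) :\ x.
  apply/setP => w; rewrite !inE; have [->|_] := eqVneq w y; last by rewrite andbCA.
  by move: yB1; rewrite inE => /andP [_ ->]; rewrite andbF.
have [|B BsB /andP [sB'B le]] := IH (y |: (B0 :\ x)) _ BsB'.
  by move: ltB0m; rewrite eqD (cardsD1 x (B0 :\: B1)) xB0.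
exists B; rewrite // le andbT; apply: subset_trans sB'B.
apply/subsetP => w; rewrite !inE => /andP [wB0 wW].
have wx : w != x by apply: contraNneq _ xW => <-.
by rewrite wx wB0 wW orbT.
Qed.

Lemma rk_submod X Y : rk Bs (X :|: Y) + rk Bs (X :&: Y) <= rk Bs X + rk Bs Y.
Proof.
have [B0 BsB0 rkI] := rk_attained (X :&: Y).
have [B1 BsB1 rkU] := rk_attained (X :|: Y).
have [B BsB /andP [sB0B leU]] := basis_augment (X :|: Y) BsB0 BsB1.
have leI : #|X :&: Y :&: B0| <= #|X :&: Y :&: B|.
  apply/subset_leq_card/subsetP => w; rewrite !inE => /andP [/andP [wX wY] wB0].
  by rewrite wX wY (subsetP sB0B) // !inE wB0 wX.
have := cardsUI (X :&: B) (Y :&: B); rewrite -setIUl setIACA setIid.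
have := leq_card_rk X BsB; have := leq_card_rk Y BsB.
lia.
Qed.

Lemma circuit_rk_lt C : circuit Bs C -> rk Bs C < #|C|.
Proof.
case=> depC _; rewrite ltn_neqAle rk_le_card andbT.
by apply: contra depC => /eqP; apply: rk_indep.
Qed.

Lemma circuit_rkD1 C x : circuit Bs C -> x \in C -> rk Bs (C :\ x) = #|C| - 1.
Proof.
case=> _ indepCD1 xC; have /exists_inP [B BsB sCxB] := indepCD1 x xC.
have := leq_card_rk (C :\ x) BsB; rewrite (setIidPl sCxB).
by have := rk_le_card (C :\ x); rewrite (cardsD1 x C) xC; lia.
Qed.

Lemma rk_setD1_circuit Y C x : circuit Bs C -> x \in C -> C \subset Y ->
  rk Bs (Y :\ x) = rk Bs Y.
Proof.
move=> circC xC sCY.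
have eqU : (Y :\ x) :|: C = Y.
  apply/setP => w; rewrite !inE; have [->|_] := eqVneq w x; first by rewrite xC (subsetP sCY).
  by case: (boolP (w \in C)) => [/(subsetP sCY) ->|]; rewrite ?orbT ?orbF.
have := rk_submod (Y :\ x) C; rewrite eqU setIC setIDA (setIidPl sCY).
rewrite (circuit_rkD1 circC xC); have := circuit_rk_lt circC.
by have := rkS (subD1set Y x); lia.
Qed.

Lemma cyclic_rk_lt Z : cyclic Bs Z -> Z != set0 -> rk Bs Z < #|Z|.
Proof.
move=> cycZ /set0Pn [z zZ]; have [C [[depC _] _ sCZ]] := cycZ z zZ.
rewrite ltn_neqAle rk_le_card andbT; apply: contra depC => /eqP rkZ.
exact: indepS sCZ (rk_indep rkZ).
Qed.

Lemma flat_rk_lt Z : flat Bs Z -> Z != setT -> rk Bs Z < k.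
Proof.
move=> flatZ; rewrite -subTset => /subsetPn [x _ xZ].
exact: leq_trans (flatZ x xZ) (rk_le_rank _).
Qed.

Lemma stressed_rk_contract A Y : stressed Bs A ->
  rk Bs (Y :|: A) - rk Bs A = minn #|Y :\: A| (k - rk Bs A).
Proof.
case=> _ /(_ (Y :\: A) (subsetDr _ _)) /=.
have -> : (Y :\: A) :|: A = Y :|: A.
  by apply/setP => w; rewrite !inE; case: (w \in A); rewrite ?orbT ?orbF.
by rewrite [~: A :|: A]setUC setUCr rkT.
Qed.

Lemma stressed_subset_cyclic A Z : stressed Bs A -> cyclic Bs Z -> rk Bs Z < k ->
  A \subset Z -> Z \subset A.
Proof.
move=> strA cycZ rkZ sAZ; apply/subsetP => x xZ; apply/negPn/negP => xA.
have [C [circC xC sCZ]] := cycZ x xZ.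
have sAZx : A \subset Z :\ x by rewrite subsetD1 sAZ xA.
have eqD : (Z :\ x) :\: A = (Z :\: A) :\ x by rewrite !setDDl setUC.
have := stressed_rk_contract (Z :\ x) strA.
rewrite (setUidPl sAZx) (rk_setD1_circuit circC xC sCZ) eqD.
have := stressed_rk_contract Z strA; rewrite (setUidPl sAZ).
rewrite (cardsD1 x (Z :\: A)) inE xA xZ.
by have := rkS sAZ; lia.
Qed.

Lemma stressed_meet_flat A Z : stressed Bs A -> flat Bs Z -> ~~ (A \subset Z) ->
  rk Bs (A :&: Z) = #|A :&: Z|.
Proof.
case=> unifA _ flatZ /subsetPn [a aA aZ].
have rkAZ := unifA (A :&: Z) (subsetIl _ _).
have eqI : Z :&: (a |: (A :&: Z)) = A :&: Z.
  apply/setP => w; rewrite !inE; have [->|_] := eqVneq w a; first by rewrite (negbTE aZ) andbF.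
  by case: (w \in Z); case: (w \in A).
have := rk_submod Z (a |: (A :&: Z)); rewrite setUCA setKI eqI rkAZ.
have : a |: (A :&: Z) \subset A by rewrite subUset sub1set aA subsetIl.
by move/rkS; have := flatZ a aZ; lia.
Qed.

Lemma stressed_join_cyclic A Z : stressed Bs A -> cyclic Bs Z -> Z != set0 ->
  rk Bs (A :&: Z) = #|A :&: Z| -> rk Bs (A :|: Z) = k.
Proof.
move=> strA cycZ Z0 rkAZ.
have := stressed_rk_contract Z strA; rewrite setUC.
have := rk_submod A Z; have := cyclic_rk_lt cycZ Z0.
have := cardsID A Z; rewrite setIC.
by have := rkS (subsetUl A Z); have := rk_le_rank (A :|: Z); lia.
Qed.

Lemma stressed_cyclic_flat A Z : stressed Bs A -> cyclic_flat Bs Z -> proper_subset Z ->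
  A != Z -> [/\ rk Bs (A :&: Z) = #|A :&: Z|, rk Bs (A :|: Z) = k
              & k + #|A :&: Z| <= rk Bs A + rk Bs Z].
Proof.
move=> strA [flatZ cycZ] [Z0 ZT] neAZ.
have nsAZ : ~~ (A \subset Z).
  apply: contra neAZ => sAZ; rewrite eqEsubset sAZ.
  exact: stressed_subset_cyclic strA cycZ (flat_rk_lt flatZ ZT) sAZ.
have rkI := stressed_meet_flat strA flatZ nsAZ.
have rkU := stressed_join_cyclic strA cycZ Z0 rkI.
by split=> //; rewrite -{1}rkU -rkI rk_submod.
Qed.

(* Qualified: [cover] alone is finset's union of a set of sets. *)
Lemma cover_exchange A B0 y z : B0 \in Bs -> y \in B0 ->
  z |: (B0 :\ y) \in Defs.cover k Bs A -> y \notin A /\ rk Bs A = #|A :&: B0|.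
Proof.
move=> BsB0 yB0; rewrite inE => /andP [_ ltA].
have leA := leq_card_rk A BsB0.
have cardD1 : #|A :&: B0| = (y \in A) + #|(A :&: B0) :\ y|.
  by rewrite (cardsD1 y) inE yB0 andbT.
have : (z |: (B0 :\ y)) :&: A \subset z |: ((A :&: B0) :\ y).
  by apply/subsetP => w; rewrite !inE; case: (w == z) => //= /andP [/andP [-> ->] ->].
move/subset_leq_card; rewrite cardsU1; have := leq_b1 (z \notin (A :&: B0) :\ y).
by case: (y \in A) cardD1 => /= cardD1; lia.
Qed.

Lemma split_cyclic_flat_stressed Z : split_matroid Bs k -> cyclic_flat Bs Z ->
  proper_subset Z -> stressed Bs Z.
Proof.
move=> [_ splitBs] cfZ propZ; have [[flatZ cycZ] [Z0 ZT]] := (cfZ, propZ).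
have [B0 BsB0 rkZ] := rk_attained Z.
have /subsetPn [z zZ zB0] : ~~ (Z \subset B0).
  apply: contraL (cyclic_rk_lt cycZ Z0) => /setIidPl eqZ.
  by rewrite rkZ eqZ ltnn.
have /subsetPn [y yB0 yZ] : ~~ (B0 \subset Z).
  apply: contraL (flat_rk_lt flatZ ZT) => /setIidPr eqB0.
  by rewrite rkZ eqB0 (card_basis BsB0) ltnn.
set B := z |: (B0 :\ y).
have cardB : #|B| = k.
  by rewrite cardsU1 !inE (negbTE zB0) andbF -(card_basis BsB0) (cardsD1 y B0) yB0.
have notBsB : B \notin Bs.
  have eqZB : Z :&: B = z |: (Z :&: B0).
    apply/setP => w; rewrite !inE; have [->|_] := eqVneq w z; first by rewrite zZ.
    by have [->|] := eqVneq w y; rewrite ?(negbTE yZ).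
  apply/negP => /(leq_card_rk Z).
  by rewrite eqZB cardsU1 inE (negbTE zB0) andbF rkZ ltnn.
have [BsB | [A [strA _ covA]]] := (splitBs B).1 cardB; first by rewrite BsB in notBsB.
have [<-|neAZ] := eqVneq A Z; first exact: strA.
have [yA rkA] := cover_exchange BsB0 yB0 covA.
have [_ _ rk_sum] := stressed_cyclic_flat strA cfZ propZ neAZ.
have ltU : #|(A :|: Z) :&: B0| < k.
  rewrite -(card_basis BsB0); apply/proper_card/properP; split; first exact: subsetIr.
  by exists y; rewrite // !inE (negbTE yA) (negbTE yZ).
(* y \notin A :|: Z makes the count of B0 on A and Z fall short of k + |A :&: Z|. *)
have leI : #|A :&: Z :&: B0| <= #|A :&: Z| by apply/subset_leq_card/subsetIl.
have := cardsUI (A :&: B0) (Z :&: B0); rewrite -setIUl setIACA setIid -rkA -rkZ.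
move=> eq_sum; have := leq_add leI ltU; rewrite addnS addnC eq_sum.
by rewrite [#|A :&: Z| + k]addnC ltnNge rk_sum.
Qed.
End MatroidRank.

Local Open Scope ring_scope.

Section Hypersimplex.
Variables (R : realFieldType) (T : finType).
Implicit Types (A B S : {set T}) (x y z : T -> R) (m : int).

Definition unit_box S x := forall i, i \in S -> 0 <= x i <= 1.

Lemma unit_boxS A S x : A \subset S -> unit_box S x -> unit_box A x.
Proof. by move=> sAS boxS i /(subsetP sAS); apply: boxS. Qed.

Lemma unit_box_sum A x : unit_box A x -> 0 <= \sum_(i in A) x i <= #|A|%:R.
Proof.
move=> boxA; rewrite sumr_ge0 => [|i /boxA /andP [] //] /=.
by rewrite -sumr_const ler_sum // => i /boxA /andP [].
Qed.

Lemma sum_indicator A B : \sum_(i in A) ((i \in B)%:R : R) = #|A :&: B|%:R.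
Proof.
rewrite (big_setID B) /= [X in _ + X]big1 ?addr0 => [|i]; last first.
  by rewrite inE => /andP [/negbTE ->].
by rewrite (eq_bigr (fun _ => 1)) ?sumr_const // => i; rewrite inE => /andP [_ ->].
Qed.

Lemma hyp_unit_box m S x : hyp m S x -> unit_box S x /\ \sum_(i in S) x i = m%:~R.
Proof.
case=> lam [lam_ge0 lam_supp lam_sum1 x_lam]; split.
  move=> i iS; rewrite x_lam // sumr_ge0 => [|B _]; last by rewrite mulr_ge0 ?ler0n.
  rewrite -[X in _ <= X]lam_sum1 ler_sum // => B _.
  by case: (i \in B); rewrite ?mulr1 ?mulr0.
under eq_bigr => i iS do rewrite x_lam //.
rewrite exchange_big (eq_bigr (fun B => lam B * m%:~R)) => [|B _].
  by rewrite -mulr_suml lam_sum1 mul1r.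
rewrite -mulr_sumr; have [->|/lam_supp [sBS cardB]] := eqVneq (lam B) 0.
  by rewrite !mul0r.
by rewrite sum_indicator (setIidPr sBS) -cardB.
Qed.

Lemma hyp_01 m S x : (forall i, i \in S -> x i = 0 \/ x i = 1) ->
  \sum_(i in S) x i = m%:~R -> hyp m S x.
Proof.
move=> x01; set B0 := S :&: [set i | x i == 1].
have x_ind i : i \in S -> x i = (i \in B0)%:R.
  by move=> iS; rewrite !inE iS; case: (x01 i iS) => ->; rewrite ?eqxx // eq_sym oner_eq0.
rewrite (eq_bigr _ x_ind) sum_indicator (setIidPr (subsetIl _ _)) => sumB0.
exists (fun B => (B == B0)%:R); split=> [B | B | | i iS].
- exact: ler0n.
- have [-> _|] := eqVneq B B0; last by rewrite eqxx.
  by split; [apply: subsetIl | apply: (@intr_inj R); rewrite -sumB0].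
- by rewrite (bigD1 B0) //= eqxx big1 ?addr0 // => B /negbTE ->.
- rewrite (bigD1 B0) //= eqxx mul1r big1 ?addr0 ?x_ind // => B /negbTE ->.
  by rewrite mul0r.
Qed.

Lemma hyp_convex m S x y z t : 0 <= t <= 1 -> hyp m S y -> hyp m S z ->
  (forall i, i \in S -> x i = t * y i + (1 - t) * z i) -> hyp m S x.
Proof.
move=> /andP [t_ge0 t_le1] [ly [ly_ge0 ly_supp ly_sum1 y_ly]].
move=> [lz [lz_ge0 lz_supp lz_sum1 z_lz]] x_yz.
have mix (c : {set T} -> R) : \sum_B (t * ly B + (1 - t) * lz B) * c B =
    t * \sum_B ly B * c B + (1 - t) * \sum_B lz B * c B.
  by rewrite !mulr_sumr -big_split; apply: eq_bigr => B _ /=; ring.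
exists (fun B => t * ly B + (1 - t) * lz B); split=> [B | B | | i iS].
- by rewrite addr_ge0 ?mulr_ge0 ?subr_ge0.
- have [ly0 | /ly_supp //] := eqVneq (ly B) 0.
  have [lz0 | /lz_supp //] := eqVneq (lz B) 0.
  by rewrite ly0 lz0 !mulr0 addr0 eqxx.
- have := mix (fun _ => 1); rewrite !(eq_bigr _ (fun B _ => mulr1 _)) ly_sum1 lz_sum1 => ->.
  by ring.
- by rewrite mix x_yz // y_ly // z_lz.
Qed.

Definition frac_set S x : {set T} := [set i in S | 0 < x i < 1].

Lemma unit_box_01 S x i : unit_box S x -> i \in S -> i \notin frac_set S x ->
  x i = 0 \/ x i = 1.
Proof.
move=> boxS iS; rewrite inE iS /=; have /andP [xi_ge0 xi_le1] := boxS i iS.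
rewrite negb_and -!leNgt => /orP [xi_le0 | xi_ge1]; [left | right]; apply/eqP.
  by rewrite eq_le xi_le0.
by rewrite eq_le xi_le1.
Qed.

Lemma frac_set_other m S x i : unit_box S x -> \sum_(l in S) x l = m%:~R ->
  i \in frac_set S x -> exists2 j, j \in frac_set S x & j != i.
Proof.
move=> boxS sumS fri; have iS : i \in S by move: fri; rewrite inE => /andP [].
apply/exists_inP; apply: contraLR fri => /exists_inPn others.
have x01 l : l \in S :\ i -> x l = 0 \/ x l = 1.
  rewrite !inE => /andP [li lS]; apply: unit_box_01 lS _ => //.
  by apply: contraNN li => frl; apply/negPn/others.
have x_ind l : l \in S :\ i -> x l = (l \in [set l | x l == 1])%:R.
  by move=> /x01 x01l; rewrite inE; case: x01l => ->; rewrite ?eqxx // eq_sym oner_eq0.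
move: sumS; rewrite (big_setD1 i iS) (eq_bigr _ x_ind) sum_indicator => /(canRL (addrK _)).
by rewrite -[_%:R]/((_%:Z)%:~R) -intrB inE iS /= => ->; rewrite ltr0z ltrz1; lia.
Qed.

Definition transfer x i j t : T -> R := fun l => x l + t * ((l == i)%:R - (l == j)%:R).

Lemma sum_transfer S x i j t : i \in S -> j \in S ->
  \sum_(l in S) transfer x i j t l = \sum_(l in S) x l.
Proof.
move=> iS jS; rewrite big_split /= -mulr_sumr sumrB.
have sum1 a : a \in S -> \sum_(l in S) ((l == a)%:R : R) = 1.
  move=> aS; rewrite (bigD1 a) //= eqxx big1 ?addr0 // => l /andP [_ /negbTE ->] //.
by rewrite !sum1 // subrr mulr0 addr0.
Qed.

Lemma transfer_frac S x i j : i != j -> i \in frac_set S x -> j \in frac_set S x ->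
  unit_box S x -> let t := Num.min (1 - x i) (x j) in
  [/\ 0 < t, unit_box S (transfer x i j t)
    & (#|frac_set S (transfer x i j t)| < #|frac_set S x|)%N].
Proof.
move=> nij fri frj boxS t; set y := transfer x i j t.
move: (fri) (frj); rewrite !inE => /and3P [iS xi_gt0 xi_lt1] /and3P [jS xj_gt0 xj_lt1].
have t_gt0 : 0 < t by rewrite lt_min subr_gt0 xi_lt1 xj_gt0.
have [t_le_i t_le_j] : t <= 1 - x i /\ t <= x j by rewrite !ge_min !lexx ?orbT.
have yi : y i = x i + t by rewrite /y /transfer eqxx (negbTE nij) subr0 mulr1.
have yj : y j = x j - t by rewrite /y /transfer eqxx eq_sym (negbTE nij) sub0r mulrN1.
have yl l : l != i -> l != j -> y l = x l.
  by move=> /negbTE li /negbTE lj; rewrite /y /transfer li lj subrr mulr0 addr0.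
split=> // [l lS | ].
  have [-> | li] := eqVneq l i; first by rewrite yi; apply/andP; split; lra.
  have [-> | lj] := eqVneq l j; first by rewrite yj; apply/andP; split; lra.
  by rewrite yl //; apply: boxS.
apply/proper_card/properP; split.
  apply/subsetP => l; have [-> _ | li] := eqVneq l i; first exact: fri.
  have [-> _ | lj] := eqVneq l j; first exact: frj.
  by rewrite !inE yl.
have [t_i | t_j] : t = 1 - x i \/ t = x j by rewrite /t minEle; case: ifP; [left | right].
  by exists i; [exact: fri | rewrite inE yi t_i addrC subrK ltxx !andbF].
by exists j; [exact: frj | rewrite inE yj t_j subrr ltxx /= andbF].
Qed.

Lemma unit_box_hyp m S x : unit_box S x -> \sum_(i in S) x i = m%:~R -> hyp m S x.
Proof.
elim: {x}_.+1 {-2}x (ltnSn #|frac_set S x|) => // N IH x ltN boxS sumS.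
have [fr0 | [i fri]] := set_0Vmem (frac_set S x).
  by apply: hyp_01 sumS => i iS; apply: (unit_box_01 boxS iS); rewrite fr0 inE.
have [j frj nji] := frac_set_other boxS sumS fri.
have nij : i != j by rewrite eq_sym.
have [u_gt0 box_u lt_u] := transfer_frac nij fri frj boxS.
have [v_gt0 box_v lt_v] := transfer_frac nji frj fri boxS.
set u := Num.min (1 - x i) (x j) in u_gt0 box_u lt_u.
set v := Num.min (1 - x j) (x i) in v_gt0 box_v lt_v.
have iS : i \in S by move: fri; rewrite inE => /andP [].
have jS : j \in S by move: frj; rewrite inE => /andP [].
(* x = (v * (x + u d) + u * (x - v d)) / (u + v) with d = e_i - e_j. *)
apply: (hyp_convex (t := v / (u + v))) (IH _ _ box_u _) (IH _ _ box_v _) _.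
- by apply/andP; split; [rewrite divr_ge0 | rewrite ler_pdivrMr ?mul1r]; lra.
- exact: leq_trans lt_u ltN.
- by rewrite sum_transfer.
- exact: leq_trans lt_v ltN.
- by rewrite sum_transfer.
- move=> l _; rewrite /transfer; field.
  by rewrite lt0r_neq0 // addr_gt0.
Qed.

Lemma hypP m S x : hyp m S x <-> unit_box S x /\ \sum_(i in S) x i = m%:~R.
Proof. by split=> [/hyp_unit_box | [boxS /(unit_box_hyp boxS)]]. Qed.

End Hypersimplex.

Section TwoSlabs.
Variables (R : realFieldType) (T : finType) (F G : {set T}) (k r s : nat) (x : T -> R).
Local Notation gamma := #|F :&: G|.
Local Notation sum_x A := (\sum_(i in A) x i).
Local Notation in_slabs := [/\ hyp k%:Z setT x, Hplus F r%:R x & Hplus G s%:R x].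

Lemma sum_blocks :
  [/\ sum_x F = sum_x (F :&: G) + sum_x (F :\: G),
      sum_x G = sum_x (F :&: G) + sum_x (G :\: F) &
      sum_x setT = sum_x F + sum_x (G :\: F) + sum_x (~: (F :|: G))].
Proof.
split; [exact: big_setID | by rewrite (big_setID F) setIC |].
by rewrite (big_setID (F :|: G)) setTI setTD (big_setID F) setUK setDUl setDv set0U.
Qed.

Lemma unit_box_blocks : unit_box setT x <->
  [/\ unit_box (F :&: G) x, unit_box (F :\: G) x, unit_box (G :\: F) x
    & unit_box (~: (F :|: G)) x].
Proof.
split=> [boxT | [boxI boxF boxG boxO] i _]; first by split; apply: unit_boxS boxT.
have : [|| i \in F :&: G, i \in F :\: G, i \in G :\: F | i \in ~: (F :|: G)].
  by rewrite !inE; case: (i \in F); case: (i \in G).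
by case/or4P; [apply: boxI | apply: boxF | apply: boxG | apply: boxO].
Qed.

Lemma in_slabs_bounds : in_slabs -> [/\ unit_box setT x,
  sum_x F + sum_x G + sum_x (~: (F :|: G)) = k%:R + sum_x (F :&: G),
  r%:R <= sum_x F, s%:R <= sum_x G
  & sum_x (F :&: G) <= gamma%:R /\ 0 <= sum_x (~: (F :|: G))].
Proof.
case=> /hypP [boxT sumT] rF sG; rewrite -pmulrn in sumT.
have [/andP [_ ->] /andP [-> _]] := (unit_box_sum (unit_boxS (subsetT (F :&: G)) boxT),
  unit_box_sum (unit_boxS (subsetT (~: (F :|: G))) boxT)).
by have [eqF eqG eqT] := sum_blocks; split=> //; lra.
Qed.

Lemma slabs_empty : (k + gamma < r + s)%N -> ~ in_slabs.
Proof.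
move=> lt /in_slabs_bounds [_ eqS rF sG [a_le d_ge0]].
have : (k + gamma).+1%:R <= (r + s)%:R :> R by rewrite ler_nat.
by rewrite -addn1 !natrD; lra.
Qed.

Lemma slabs_tight : (r + s = k + gamma)%N -> in_slabs <-> unit_box setT x /\
  [/\ sum_x (F :&: G) = gamma%:R, sum_x (F :\: G) = r%:R - gamma%:R,
      sum_x (G :\: F) = s%:R - gamma%:R & sum_x (~: (F :|: G)) = 0].
Proof.
move=> /(congr1 (fun n => n%:R : R)); rewrite !natrD => eq_rs.
have [eqF eqG eqT] := sum_blocks.
split=> [/in_slabs_bounds [boxT eqS rF sG [a_le d_ge0]] | [boxT [eqI eqFG eqGF eqO]]].
  by split=> //; split; lra.
by split; [apply/hypP; split; rewrite // -pmulrn | rewrite /Hplus | rewrite /Hplus]; lra.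
Qed.

Lemma slabs_product : (r + s = k + gamma)%N -> in_slabs <->
  [/\ hyp gamma%:Z (F :&: G) x, hyp (r%:Z - gamma%:Z) (F :\: G) x,
      hyp (s%:Z - gamma%:Z) (G :\: F) x & hyp 0 (~: (F :|: G)) x].
Proof.
move=> eq_rs; rewrite (slabs_tight eq_rs) unit_box_blocks.
split=> [[[bI bF bG bO] [eI eF eG eO]] | ].
  by split; apply/hypP; split; rewrite // ?intrB -?pmulrn ?mulr0z.
move=> [/hypP [bI eI] /hypP [bF eF] /hypP [bG eG] /hypP [bO eO]].
by rewrite ?intrB -?pmulrn ?mulr0z in eI eF eG eO.
Qed.

Lemma slabs_hyperplanes : (r + s = k + gamma)%N -> in_slabs <->
  [/\ hyp k%:Z setT x, Hyper F r%:R x & Hyper G s%:R x].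
Proof.
move=> eq_rs; split=> [Q | [? [? _] [? _]]]; last by split.
have [eqF eqG eqT] := sum_blocks.
have [_ [eqI eqFG eqGF _]] := (slabs_tight eq_rs).1 Q.
by case: Q => ? ? ?; split=> //; split=> //; rewrite /Hminus; lra.
Qed.

End TwoSlabs.

Theorem mainTheorem3 (R : realFieldType) (n k : nat) (Bs : {set {set 'I_n}})
    (F G : {set 'I_n}) :
  is_matroid Bs -> (forall B, B \in Bs -> #|B| = k) -> split_matroid Bs k ->
  cyclic_flat Bs F -> cyclic_flat Bs G -> proper_subset F -> proper_subset G ->
  F != G ->
  let r := rk Bs F in let s := rk Bs G in let gamma := #|F :&: G| in
  let Q := fun x : 'I_n -> R =>
    [/\ hyp k%:Z setT x, Hplus F r%:R x & Hplus G s%:R x] in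
  (modular_pair Bs F G ->
     forall x : 'I_n -> R,
       (Q x <-> [/\ hyp gamma%:Z (F :&: G) x, hyp (r%:Z - gamma%:Z) (F :\: G) x,
                    hyp (s%:Z - gamma%:Z) (G :\: F) x & hyp 0 (~: (F :|: G)) x])
       /\ (Q x <-> [/\ hyp k%:Z setT x, Hyper F r%:R x & Hyper G s%:R x]))
  /\ (~ modular_pair Bs F G -> forall x : 'I_n -> R, ~ Q x).
Proof.
move=> matroidBs card_basis splitBs cfF cfG propF propG neFG r s gamma Q.
have strF := split_cyclic_flat_stressed matroidBs card_basis splitBs cfF propF.
have [rkI rkU rk_sum] := stressed_cyclic_flat matroidBs card_basis strF cfG propG neFG.
have modularE : modular_pair Bs F G <-> (r + s = k + gamma)%N.
  by rewrite /modular_pair rkU rkI /r /s /gamma.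
split=> [/modularE tight x | nonmodular x].
  by split; [apply: slabs_product | apply: slabs_hyperplanes].
apply: slabs_empty; rewrite ltn_neqAle rk_sum andbT eq_sym.
by apply/eqP => tight; apply/nonmodular/modularE.
Qed.
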